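(* Let $G=(\mathcal{N},\mathcal{L})$ be a finite undirected graph with distinct non-adjacent vertices $a$ (Alice) and $b$ (Bob). Suppose each edge $e\in\mathcal{L}$ carries a key $k_e\in\{0,1\}^n$, the keys being independent and uniformly distributed. In scheme $\mathcal{M}_0$, every vertex $v\notin\{a,b\}$ publicly announces $p_v=\bigoplus_{e\ni v}k_e$ (XOR over all edges incident to $v$); Alice computes $k_A=\bigoplus_{e\ni a}k_e$; Bob computes $k_B=\big(\bigoplus_{v\notin\{a,b\}}p_v\big)\oplus\big(\bigoplus_{e\ni b}k_e\big)$. Then (i) $k_B=k_A$; and (ii) for an attack $\mathcal{A}\subseteq\mathcal{N}\setminus\{a,b\}$, in which the eavesdropper learns all announced parities $p_v$ and all keys $k_e$ with $e\in\mathcal{L}_A$, the key $k_A$ is uniformly distributed and independent of the eavesdropper's information if $\mathcal{A}$ is not a strongest attack, whereas if $\mathcal{A}$ is a strongest attack the eavesdropper can compute $k_A$. In other words, $\mathcal{M}_0$ has the highest security level: it is insecure exactly against the strongest attacks.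
   Context: $\mathcal{L}_A$ is the set of edges with at least one endpoint in $\mathcal{A}$. A communication scheme $\mathcal{M}$ is a set of simple paths from $a$ to $b$; $sec(\mathcal{A},\mathcal{M})=1$ if some path in $\mathcal{M}$ avoids all vertices of $\mathcal{A}$, else $0$. An attack $\mathcal{A}$ is strongest if $sec(\mathcal{A},\mathcal{M})=0$ for all schemes $\mathcal{M}$; equivalently, there is a vertex partition separating $a$ from $b$ all of whose crossing edges lie in $\mathcal{L}_A$. A scheme has the highest security level if it is secure against exactly the attacks that are not strongest. *)

From HB Require Import structures.
From mathcomp Require Import all_boot all_order all_algebra.
Set Implicit Arguments. Unset Strict Implicit. Unset Printing Implicit Defensive.
Import GRing.Theory.
Local Open Scope ring_scope.

(* A finite undirected simple graph on the finite vertex type V is given by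
   its edge set E : {set {set V}}, every edge being a 2-element set of
   vertices (hypothesis [simple_graph E]).  A key is a vector in 'F_2^n,
   XOR is addition in 'rV['F_2]_n.  A key assignment is a finite function
   from (vertex sets) to keys; only its values on edges e \in E matter. *)

Definition simple_graph (V : finType) (E : {set {set V}}) : Prop :=
  forall e, e \in E -> #|e| = 2%N.

Definition adj (V : finType) (E : {set {set V}}) : rel V :=
  fun x y => [set x; y] \in E.

Definition keys (V : finType) (n : nat) := {ffun {set V} -> 'rV['F_2]_n}.

Definition LA (V : finType) (E : {set {set V}}) (A : {set V}) : {set {set V}} :=
  [set e in E | e :&: A != set0].

Definition simple_path (V : finType) (E : {set {set V}}) (a b : V)
  (p : seq V) : Prop :=
  exists rest, p = a :: rest /\ path (adj E) a rest /\ last a rest = b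
               /\ uniq (a :: rest).

Definition scheme (V : finType) (E : {set {set V}}) (a b : V)
  (M : seq V -> Prop) : Prop :=
  forall p, M p -> simple_path E a b p.

Definition sec (V : finType) (A : {set V}) (M : seq V -> Prop) : Prop :=
  exists p, M p /\ all (fun v => v \notin A) p.

Definition strongest (V : finType) (E : {set {set V}}) (a b : V)
  (A : {set V}) : Prop :=
  forall M, scheme E a b M -> ~ sec A M.

Definition parity (V : finType) (E : {set {set V}}) (n : nat)
  (k : keys V n) (v : V) : 'rV['F_2]_n :=
  \sum_(e in E | v \in e) k e.

Definition keyA (V : finType) (E : {set {set V}}) (n : nat) (a : V)
  (k : keys V n) : 'rV['F_2]_n := parity E k a.

Definition keyB (V : finType) (E : {set {set V}}) (n : nat) (a b : V)
  (k : keys V n) : 'rV['F_2]_n :=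
  (\sum_(v | v \notin [set a; b]) parity E k v) + parity E k b.

(* Eavesdropper's information under attack A: all announced parities p_v
   (v \notin {a,b}; other entries set to 0) and all keys on edges of L_A
   (other entries set to 0). *)
Definition eve_view (V : finType) (E : {set {set V}}) (n : nat) (a b : V)
  (A : {set V}) (k : keys V n) :
  {ffun V -> 'rV['F_2]_n} * {ffun {set V} -> 'rV['F_2]_n} :=
  ([ffun v => if v \in [set a; b] then 0 else parity E k v],
   [ffun e => if e \in LA E A then k e else 0]).

From HB Require Import structures.
From mathcomp Require Import all_boot all_order all_algebra.
Import GRing.Theory.
Local Open Scope ring_scope.
Set Implicit Arguments. Unset Strict Implicit.

(* (i) Correctness is a handshake argument: summing all parities counts every
   key twice (each edge has two endpoints), so over 'F_2 the total vanishes,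
   and Bob's sum of the public parities plus his own equals Alice's parity.

   (ii) If A is not a strongest attack, some simple a-b path avoids A.  Its
   indicator is an edge function c : edges -> 'F_2 (a "flow") vanishing on
   L_A whose boundary is the indicator of {a, b}.  Translating keys by
   k |-> k + c *: d changes no public parity and no key of L_A, but adds d
   to Alice's key; these translations are bijections, so every value of k_A
   is equally likely given Eve's view.

   (iii) If A is strongest, the component S of a in G - A misses b.  Every
   edge outside L_A meets S in 0 or 2 vertices, so the sum of the parities
   over S only involves keys of L_A (each counted |e ∩ S| times); removing
   the public parities of S \ {a} leaves exactly k_A. *)

Section Char2.
Variable U : lmodType 'F_2.

Lemma addxx (x : U) : x + x = 0.
Proof. by rewrite -mulr2n -scaler_nat pchar_Fp_0 ?scale0r. Qed.

Lemma oppxx (x : U) : - x = x.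
Proof. by apply/eqP; rewrite -subr_eq0 -opprD addxx oppr0. Qed.

Lemma mulrn_odd (x : U) m : x *+ m = x *+ odd m.
Proof.
by rewrite -{1}(odd_double_half m) mulrnDr -mul2n mulrnA mulr2n addxx mul0rn addr0.
Qed.
End Char2.

Lemma addxx_F2 (x : 'F_2) : x + x = 0.
Proof. by rewrite -mulr2n -mulr_natr pchar_Fp_0 ?mulr0. Qed.

Section Graph.
Variables (V : finType) (E : {set {set V}}).
Hypothesis hE : simple_graph E.

Lemma sum_parity n (k : keys V n) (S : {set V}) :
  \sum_(v in S) parity E k v = \sum_(e in E) k e *+ #|e :&: S|.
Proof.
rewrite /parity; under eq_bigr do rewrite big_mkcondr /=.
rewrite exchange_big /=; apply: eq_bigr => e _.
rewrite -big_mkcondr /= -sumr_const.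
by apply: eq_bigl => v; rewrite !inE andbC.
Qed.

Lemma sum_parity_all n (k : keys V n) : \sum_v parity E k v = 0.
Proof.
have := sum_parity k setT; rewrite (eq_bigl predT) => [->|v]; last by rewrite inE.
by rewrite big1 // => e he; rewrite setIT hE // mulr2n addxx.
Qed.

Lemma edge_of_adj x y : adj E x y -> x != y.
Proof. by rewrite /adj => /hE; rewrite cards2; case: (x != y). Qed.

Lemma keyB_correct n (a b : V) (hab : a != b) (k : keys V n) :
  keyB E a b k = keyA E a k.
Proof.
have := sum_parity_all k.
rewrite (bigD1 a) //= (bigD1 b) 1?eq_sym //= => tot.
move/eqP: tot; rewrite addr_eq0 oppxx /keyB /keyA addrC => /eqP ->.
by congr (_ + _); apply: eq_bigl => v; rewrite !inE negb_or andbC.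
Qed.

Definition boundary (c : {set V} -> 'F_2) (v : V) : 'F_2 :=
  \sum_(e in E | v \in e) c e.

Definition avoiding_flow (A : {set V}) (x y : V) (c : {set V} -> 'F_2) : Prop :=
  (forall e, e \in LA E A -> c e = 0) /\
  (forall v, boundary c v = (v == x)%:R + (v == y)%:R).

Lemma boundaryD (c c' : {set V} -> 'F_2) v :
  boundary (fun e => c e + c' e) v = boundary c v + boundary c' v.
Proof. exact: big_split. Qed.

Lemma boundary_edge (f : {set V}) v :
  f \in E -> boundary (fun e => (e == f)%:R) v = (v \in f)%:R.
Proof.
move=> hf; rewrite /boundary; case hv: (v \in f).
  rewrite (bigD1 f) /=; last by rewrite hf hv.
  by rewrite eqxx big1 ?addr0 // => e /andP [_ /negbTE ->].
by rewrite big1 // => e /andP [_ hve]; case: eqP => // ef; rewrite -ef hve in hv.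
Qed.

Lemma edge_notin_LA (A : {set V}) x y :
  x \notin A -> y \notin A -> [set x; y] \notin LA E A.
Proof.
move=> hx hy; rewrite inE negb_and negbK; apply/orP; right.
apply/eqP/setP => z; rewrite !inE.
by case: (z =P x) => [->|_]; [rewrite (negbTE hx)|case: (z =P y) => [->|]];
  rewrite ?(negbTE hy).
Qed.

(* A walk avoiding A carries an avoiding flow between its endpoints: the
   sum (mod 2) of the indicators of its edges. *)
Lemma path_flow (A : {set V}) : forall rest w, path (adj E) w rest ->
  all (fun v => v \notin A) (w :: rest) ->
  exists c, avoiding_flow A w (last w rest) c.
Proof.
elim=> [|w' rest IH] w /=.
  by move=> _ _; exists (fun _ => 0); split=> // v; rewrite /boundary big1 // addxx_F2.
move=> /andP [hww' hp] /andP [hw hall].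
have [c [hcLA hcb]] := IH w' hp hall.
move: hall => /= /andP [hw' _].
exists (fun e => c e + (e == [set w; w'])%:R); split.
  move=> e he; rewrite hcLA // add0r.
  by case: eqP => // ee; move: he; rewrite ee (negbTE (edge_notin_LA hw hw')).
move=> v; rewrite boundaryD hcb boundary_edge // !inE.
case: (v =P w) => [->|_] /=; last by rewrite addrC addrA addxx_F2.
by rewrite (negbTE (edge_of_adj hww')) add0r addrC.
Qed.

Lemma simple_path_flow (A : {set V}) a b p :
  simple_path E a b p -> all (fun v => v \notin A) p ->
  exists c, avoiding_flow A a b c.
Proof.
case=> rest [-> [hpath [hlast _]]] hall.
by have := path_flow hpath hall; rewrite hlast.
Qed.
End Graph.

Section Translation.
(* An avoiding flow c from a to b yields translations of the key space that
   Eve cannot observe but that shift Alice's key arbitrarily. *)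
Variables (V : finType) (E : {set {set V}}) (n : nat) (a b : V) (A : {set V}).
Hypothesis hab : a != b.
Variable c : {set V} -> 'F_2.
Hypothesis hc : avoiding_flow E A a b c.

Definition shift (d : 'rV['F_2]_n) (k : keys V n) : keys V n :=
  [ffun e => k e + c e *: d].

Lemma parity_shift d k v :
  parity E (shift d k) v = parity E k v + boundary E c v *: d.
Proof.
by rewrite /parity; under eq_bigr do rewrite ffunE; rewrite big_split scaler_suml.
Qed.

Lemma eve_view_shift d k : eve_view E a b A (shift d k) = eve_view E a b A k.
Proof.
have [hcLA hcb] := hc.
congr pair; [apply/ffunP => v | apply/ffunP => e]; rewrite !ffunE.
  case: ifPn => // hv; rewrite parity_shift hcb.
  move: hv; rewrite !inE negb_or => /andP [/negbTE -> /negbTE ->].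
  by rewrite add0r scale0r addr0.
by case: ifP => // he; rewrite hcLA // scale0r addr0.
Qed.

Lemma keyA_shift d k : keyA E a (shift d k) = keyA E a k + d.
Proof.
have [_ hcb] := hc.
by rewrite /keyA parity_shift hcb eqxx (negbTE hab) addr0 scale1r.
Qed.

Lemma shiftK d : cancel (shift d) (shift (- d)).
Proof. by move=> k; apply/ffunP => e; rewrite !ffunE scalerN addrK. Qed.

Definition key_fibre (o : {ffun V -> 'rV['F_2]_n} * {ffun {set V} -> 'rV['F_2]_n})
  (x : 'rV['F_2]_n) : {set keys V n} :=
  [set k | (eve_view E a b A k == o) && (keyA E a k == x)].

Lemma key_fibre_translate o x : key_fibre o x = shift x @: key_fibre o 0.
Proof.
apply/setP => k; rewrite inE; apply/idP/imsetP.
  move=> /andP [hview hkey]; exists (shift (- x) k).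
    by rewrite inE eve_view_shift keyA_shift (eqP hkey) subrr hview eqxx.
  by rewrite -{1}(opprK x) shiftK.
move=> [k' ]; rewrite inE => /andP [hview hkey] ->.
by rewrite eve_view_shift keyA_shift (eqP hkey) add0r hview eqxx.
Qed.

Lemma card_key_fibre o x : #|key_fibre o x| = #|key_fibre o 0|.
Proof. by rewrite key_fibre_translate card_imset //; apply: can_inj (shiftK x). Qed.

(* Alice's key is uniform and independent of Eve's view. *)
Lemma key_uniform o x :
  (#|key_fibre o x| * 2 ^ n)%N = #|[set k : keys V n | eve_view E a b A k == o]|.
Proof.
rewrite -[in RHS]sum1_card (partition_big (keyA E a) xpredT) //=.
rewrite (eq_bigr (fun _ => #|key_fibre o x|)) => [|y _].
  by rewrite sum_nat_const card_mx card_Fp // mul1n mulnC.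
rewrite card_key_fibre -(card_key_fibre o y) -sum1_card.
by apply: eq_bigl => k; rewrite !inE.
Qed.
End Translation.

Lemma strongestP (V : finType) (E : {set {set V}}) (a b : V) (A : {set V}) :
  strongest E a b A <->
  ~ exists p, simple_path E a b p /\ all (fun v => v \notin A) p.
Proof.
split.
  by move=> hs [p [hp hall]]; apply: (hs (simple_path E a b)) => //; exists p.
by move=> hno M hM [p [hMp hall]]; apply: hno; exists p; split => //; apply: hM.
Qed.

Section Cut.
(* Under a strongest attack the component of a in G - A is a cut separating
   a from b whose crossing edges all lie in L_A. *)
Variables (V : finType) (E : {set {set V}}) (a b : V) (A : {set V}).
Hypothesis hE : simple_graph E.
Hypothesis haA : a \notin A.

Definition avoid_rel : rel V :=
  [rel x y | adj E x y && (x \notin A) && (y \notin A)].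

Definition component : {set V} := [set v | connect avoid_rel a v].

Lemma avoid_path_all x p : path avoid_rel x p -> all (fun v => v \notin A) p.
Proof.
by elim: p x => //= y p IH x /andP [/andP [/andP [_ _] ->] /IH].
Qed.

Lemma component_path :
  b \in component -> exists p, simple_path E a b p /\ all (fun v => v \notin A) p.
Proof.
rewrite inE => /connectP [p hp]; case: (shortenP hp) => p' hp' hu _ hb.
exists (a :: p'); split; last by rewrite /= haA (avoid_path_all hp').
exists p'; split=> //; split=> //.
by apply: sub_path hp' => x y /andP [/andP []].
Qed.

Lemma component_cut_even e :
  e \in E -> e \notin LA E A -> ~~ odd #|e :&: component|.
Proof.
move=> he; rewrite inE he negbK => /eqP heA.
have /eqP/cards2P [x [y [hxy ee]]] := hE he.
have outA z : z \in e -> z \notin A.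
  by move=> hz; apply/negP => hzA; have := in_setI z e A; rewrite hz hzA heA inE.
have hx : x \notin A by apply: outA; rewrite ee !inE eqxx.
have hy : y \notin A by apply: outA; rewrite ee !inE eqxx orbT.
have rxy : avoid_rel x y by rewrite /avoid_rel /= /adj -ee he hx hy.
have ryx : avoid_rel y x by rewrite /avoid_rel /= /adj setUC -ee he hx hy.
have hxyS : (y \in component) = (x \in component).
  by rewrite !inE; apply/idP/idP => h; apply: (connect_trans h); apply: connect1.
case hxS : (x \in component).
  suff /setIidPl -> : e \subset component by rewrite hE.
  by apply/subsetP => z; rewrite ee in_set2 => /orP [] /eqP ->; rewrite ?hxyS.
suff -> : e :&: component = set0 by rewrite cards0.
apply/setP => z; rewrite ee in_set0 in_setI in_set2.
by apply/negbTE/andP => -[/orP [] /eqP ->]; rewrite ?hxyS hxS.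
Qed.

(* When b lies outside the component, Eve's view determines Alice's key: it
   is the parity sum over the component minus the public parities in it. *)
Lemma eve_computes_key n :
  b \notin component ->
  exists f, forall k : keys V n, f (eve_view E a b A k) = keyA E a k.
Proof.
move=> hbS.
exists (fun o : {ffun V -> 'rV['F_2]_n} * {ffun {set V} -> 'rV['F_2]_n} =>
  \sum_(v in component | v != a) o.1 v + \sum_(e in E) o.2 e *+ #|e :&: component|).
move=> k /=.
have hpublic : \sum_(v in component | v != a)
    [ffun v => if v \in [set a; b] then 0 else parity E k v] v
  = \sum_(v in component | v != a) parity E k v.
  apply: eq_bigr => v /andP [hv hva]; rewrite ffunE !inE (negbTE hva) /=.
  by case: eqP => // ev; move: hv; rewrite ev (negbTE hbS).
have hcut : \sum_(e in E) [ffun e => if e \in LA E A then k e else 0] e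
      *+ #|e :&: component| = \sum_(v in component) parity E k v.
  rewrite sum_parity; apply: eq_bigr => e he; rewrite ffunE.
  case: ifPn => // hLA; rewrite mul0rn mulrn_odd.
  by rewrite (negbTE (component_cut_even he hLA)).
rewrite hpublic hcut [\sum_(v in component) _](bigD1 a) /=; last first.
  by rewrite inE connect0.
by rewrite addrCA addxx addr0.
Qed.
End Cut.

Theorem theorem2 (V : finType) (E : {set {set V}}) (a b : V) (n : nat)
  (hE : simple_graph E) (hab : a != b) (hnadj : [set a; b] \notin E)
  (A : {set V}) (hA : A \subset ~: [set a; b]) :
  (forall k : keys V n, keyB E a b k = keyA E a k) /\
  (~ strongest E a b A ->
     forall o x,
       (#|[set k : keys V n | (eve_view E a b A k == o) && (keyA E a k == x)]|
          * 2 ^ n)%N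
       = #|[set k : keys V n | eve_view E a b A k == o]|) /\
  (strongest E a b A ->
     exists f, forall k : keys V n, f (eve_view E a b A k) = keyA E a k).
Proof.
have haA : a \notin A.
  by apply/negP => /(subsetP hA); rewrite !inE eqxx.
split; first by move=> k; apply: keyB_correct.
split=> [hns o x | hs].
  (* The count is decidable, so it suffices to refute its failure, which
     would make A strongest. *)
  apply/eqP/contraT => hne; case: hns; apply/strongestP => -[p [hp hall]].
  have [c hc] := simple_path_flow hE hp hall.
  by case/negP: hne; apply/eqP; exact: (key_uniform (n := n) hab hc).
apply: (eve_computes_key hE n); apply/negP => hbS.
by move/strongestP: hs; apply; apply: component_path.
Qed.
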